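(* Let $G$ and $H$ be nontrivial finite groups and let $p$ be a prime. Then $G\times H$ contains an element of order $p$ whose centralizer in $G\times H$ is a $p$-group if and only if both $G$ contains an element of order $p$ whose centralizer in $G$ is a $p$-group and $H$ contains an element of order $p$ whose centralizer in $H$ is a $p$-group. *)

From mathcomp Require Import all_boot all_fingroup all_solvable.
Set Implicit Arguments. Unset Strict Implicit. Unset Printing Implicit Defensive.
Local Open Scope group_scope.

Definition has_p_elt_pcent (gT : finGroupType) (p : nat) (G : {set gT}) : Prop :=
  exists2 x, x \in G & (#[x] = p /\ p.-group 'C_G[x]).

(* In G x H the centralizer of (x, y) is C_G[x] x C_H[y] and the order of (x, y) is
   lcm(#[x], #[y]).  So (x, y) is a witness in G x H exactly when both
   components have order dividing p, at least one of them order p, and both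
   centralizers are p-groups.  A component of order 1 is the identity; its
   centralizer is the whole nontrivial factor, which is then a p-group and
   contains an element of order p by Cauchy's theorem. *)

From mathcomp Require Import all_boot all_fingroup all_solvable.
Set Implicit Arguments. Unset Strict Implicit.
Local Open Scope group_scope.

Section DirectProduct.

Variables gT hT : finGroupType.
Implicit Types (x : gT) (y : hT).

Lemma expg_pair x y n : (x, y) ^+ n = (x ^+ n, y ^+ n).
Proof. by elim: n => [|n IHn] //; rewrite !expgS IHn. Qed.

Lemma order_pair x y : #[(x, y)] = lcmn #[x] #[y].
Proof.
have dvd_order_pair n : (#[(x, y)] %| n) = (lcmn #[x] #[y] %| n).
  by rewrite dvdn_lcm !order_dvdn expg_pair xpair_eqE.
by apply/eqP; rewrite eqn_dvd dvd_order_pair dvdnn -dvd_order_pair dvdnn.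
Qed.

Lemma cent1_pair x y : 'C[(x, y)] = setX 'C[x] 'C[y].
Proof. by apply/setP => -[a b]; rewrite in_setX !cent1E xpair_eqE. Qed.

Lemma pgroup_setX p (A : {set gT}) (B : {set hT}) :
  p.-group (setX A B) = p.-group A && p.-group B.
Proof. by rewrite /pgroup cardsX pnatM. Qed.

End DirectProduct.

Lemma pgroup_has_p_elt_pcent (gT : finGroupType) p (G : {group gT}) :
  prime p -> G :!=: 1 -> p.-group G -> has_p_elt_pcent p G.
Proof.
move=> p_pr ntG pG; have [_ p_dvd_G _] := pgroup_pdiv pG ntG.
have [x Gx ox] := Cauchy p_pr p_dvd_G.
by exists x => //; split => //; apply: pgroupS pG; apply: subsetIl.
Qed.

Lemma has_p_elt_pcent_order_dvdn (gT : finGroupType) p (x : gT) :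
  prime p -> [set: gT] :!=: 1 -> #[x] %| p -> p.-group 'C[x] ->
  has_p_elt_pcent p [set: gT].
Proof.
move=> p_pr ntG x_dvd_p pCx; have /primeP[_ dvd_p] := p_pr.
have /orP[| /eqP ox] := dvd_p _ x_dvd_p.
  rewrite order_eq1 => /eqP x1; rewrite x1 cent11T in pCx.
  exact: (@pgroup_has_p_elt_pcent _ _ [set: gT]%G).
by exists x; rewrite ?inE ?setTI.
Qed.

Theorem lemma4p5 (gT hT : finGroupType) (p : nat) :
  [set: gT] != 1%g -> [set: hT] != 1%g -> prime p ->
  has_p_elt_pcent p [set: gT * hT]
  <-> has_p_elt_pcent p [set: gT] /\ has_p_elt_pcent p [set: hT].
Proof.
move=> ntG ntH p_pr; split.
  case=> -[x y] _ [/[!order_pair] oxy].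
  rewrite setTI cent1_pair pgroup_setX => /andP[pCx pCy].
  split; [apply: (has_p_elt_pcent_order_dvdn p_pr ntG _ pCx) |
          apply: (has_p_elt_pcent_order_dvdn p_pr ntH _ pCy)].
    by rewrite -oxy dvdn_lcml.
  by rewrite -oxy dvdn_lcmr.
case=> -[x _ [ox /[!setTI] pCx]] [y _ [oy /[!setTI] pCy]].
exists (x, y); first exact: in_setT.
rewrite order_pair ox oy (lcmn_idPl (dvdnn p)) setTI cent1_pair pgroup_setX.
by rewrite pCx pCy.
Qed.
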